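(* Suppose $g=1$ (so $f$ has degree $3$) and $\mathfrak{s}\subset\mathcal{R}$ is a cluster of cardinality $2$. Then $B_{f,\mathfrak{s}}=4v(2)$.
   Context: $K$ is a field of characteristic $0$, complete for a discrete valuation $v$ (values in $\mathbb{Q}\cup\{+\infty\}$) with algebraically closed residue field of characteristic $2$; $v$ extends to a fixed algebraic closure $\bar K$. $f\in K[x]$ is separable of degree $2g+1$ with root set $\mathcal{R}\subset\bar K$. Discs: $D_{\alpha,b}=\{z\in\bar K:v(z-\alpha)\ge b\}$. A nonempty $\mathfrak{s}\subseteq\mathcal{R}$ is a cluster if $\mathfrak{s}=D\cap\mathcal{R}$ for some disc $D$; $d_+(\mathfrak{s})=\min_{a\ne a'\in\mathfrak{s}}v(a-a')$; for $\mathfrak{s}\ne\mathcal{R}$, the parent $\mathfrak{s}'$ is the smallest cluster properly containing $\mathfrak{s}$ and $d_-(\mathfrak{s})=d_+(\mathfrak{s}')$. For nonzero $h\in\bar K[z]$, $v(h)$ is the minimum valuation of its coefficients. A part-square decomposition of $h$ is $h=q^2+\rho$ with $\deg q\le\lceil\deg h/2\rceil$, and $t_{q,\rho}=v(\rho)-v(h)$. It is good if $t_{q,\rho}\ge2v(2)$ or no part-square decomposition $h=\tilde q^2+\tilde\rho$ has $t_{\tilde q,\tilde\rho}>t_{q,\rho}$. For a finite nonempty multiset $S\subset\bar K$ and disc $D=D_{\alpha,v(\beta)}$, $\mathfrak{t}^{S}(D)=\min\{t_{q,\rho},2v(2)\}$ where $h$ has root multiset $S$ and $h(\alpha+\beta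 z)=q^2+\rho$ is any good part-square decomposition (independent of choices). For an even-cardinality cluster $\mathfrak{s}$ and $\alpha\in\mathfrak{s}$, for $b\ge0$ set $\mathfrak{t}^{\mathfrak{s}}_+(b)=\mathfrak{t}^{\mathfrak{s}}(D_{\alpha,d_+(\mathfrak{s})-b})$, $\mathfrak{t}^{\mathfrak{s}}_-(b)=\mathfrak{t}^{\mathcal{R}\setminus\mathfrak{s}}(D_{\alpha,d_-(\mathfrak{s})+b})$, $b_0(\mathfrak{t}^{\mathfrak{s}}_\pm)$ the least $b\ge0$ at which $\mathfrak{t}^{\mathfrak{s}}_\pm$ equals $2v(2)$, and $B_{f,\mathfrak{s}}=b_0(\mathfrak{t}^{\mathfrak{s}}_+)+b_0(\mathfrak{t}^{\mathfrak{s}}_-)$. *)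

From HB Require Import structures.
From mathcomp Require Import all_boot all_order all_algebra all_field.
From mathcomp Require Import constructive_ereal.
Set Implicit Arguments. Unset Strict Implicit. Unset Printing Implicit Defensive.
Import Order.TTheory GRing.Theory Num.Theory.
Local Open Scope ring_scope.
Local Open Scope ereal_scope.

Section Defs.
Variable L : fieldType.
Variable v : L -> \bar rat.

Definition is_valuation :=
  [/\ forall x, (v x = +oo) <-> x = 0%R,
      forall x, v x != -oo,
      forall x y, v (x * y)%R = v x + v y &
      forall x y, Order.min (v x) (v y) <= v (x + y)%R].

Definition two_v2 : \bar rat := v 2%:R + v 2%:R.

Definition vpoly (h : {poly L}) : \bar rat :=
  \big[Order.min/+oo]_(i < size h) v h`_i.

Definition psd (h q rho : {poly L}) : Prop :=
  h = (q ^+ 2 + rho)%R /\ ((size q).-1 <= uphalf (size h).-1)%N.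

Definition tqr (h rho : {poly L}) : \bar rat := vpoly rho - vpoly h.

Definition good_psd (h q rho : {poly L}) : Prop :=
  psd h q rho /\
  (two_v2 <= tqr h rho \/
   forall q' rho', psd h q' rho' -> ~ (tqr h rho < tqr h rho')).

Definition polyS (S : seq L) : {poly L} := \prod_(a <- S) ('X - a%:P).

(* tS v S alpha beta x : x is t^S(D_{alpha, v(beta)}), computed from a good
   part-square decomposition of h(alpha + beta z). *)
Definition tS (S : seq L) (alpha beta : L) (x : \bar rat) : Prop :=
  let h := polyS S \Po (alpha%:P + beta *: 'X)%R in
  exists q rho, good_psd h q rho /\ x = Order.min (tqr h rho) two_v2.

Definition is_cluster (rs s : seq L) : Prop :=
  s != [::] /\
  exists (alpha : L) (b : rat),
    forall x, (x \in s) = (x \in rs) && (b%:E <= v (x - alpha)%R).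

Definition dplus (s : seq L) : \bar rat :=
  \big[Order.min/+oo]_(a <- s) \big[Order.min/+oo]_(a' <- s | a != a')
     v (a - a')%R.

Definition proper_sub (s c : seq L) : Prop :=
  {subset s <= c} /\ exists2 x, x \in c & x \notin s.

Definition is_parent (rs s s' : seq L) : Prop :=
  [/\ is_cluster rs s', proper_sub s s' &
      forall c, is_cluster rs c -> proper_sub s c -> {subset s' <= c}].

Definition tplus (s : seq L) (alpha : L) (b : rat) (x : \bar rat) : Prop :=
  exists beta, v beta = dplus s - b%:E /\ tS s alpha beta x.

(* t_-^s(b) = t^{R \ s}(D_{alpha, d_-(s) + b}), d_-(s) = d_+(parent) *)
Definition tminus (rs s : seq L) (alpha : L) (b : rat) (x : \bar rat) : Prop :=
  exists s', is_parent rs s s' /\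
  exists beta, v beta = dplus s' + b%:E /\
    tS [seq y <- rs | y \notin s] alpha beta x.

Definition is_b0 (T : rat -> \bar rat -> Prop) (b : rat) : Prop :=
  [/\ (0 <= b)%R, T b two_v2 &
      forall b', (0 <= b')%R -> (b' < b)%R -> ~ T b' two_v2].

End Defs.

Section KDefs.
Variables (K : fieldType) (L : fieldType) (iota : {rmorphism K -> L}).
Variable v : L -> \bar rat.

Definition algebraic_over :=
  forall x : L, exists2 p : {poly K}, p != 0%R & root (map_poly iota p) x.

Definition discrete_on_K :=
  exists2 c : rat, (0 < c)%R &
    (forall x : K, x != 0%R -> exists n : int, v (iota x) = (n%:~R * c)%R%:E)
    /\ exists x : K, v (iota x) = c%:E.

Definition complete_on_K :=
  forall u : nat -> K,
    (forall M : rat, exists N, forall m n, (N <= m)%N -> (N <= n)%N ->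
        M%:E <= v (iota (u m - u n)%R)) ->
    exists l : K, forall M : rat, exists N, forall n, (N <= n)%N ->
        M%:E <= v (iota (u n - l)%R).

(* the residue field O_K / m_K is algebraically closed: every monic
   polynomial of positive degree over the residue field (= reduction of a
   polynomial over O_K with unit leading coefficient) has a root *)
Definition residue_alg_closed :=
  forall p : {poly K}, (1 < size p)%N ->
    (forall i, 0 <= v (iota p`_i)) -> v (iota (lead_coef p)) = 0 ->
    exists x : K, 0 <= v (iota x) /\ 0 < v (iota p.[x]).

Definition residue_char2 := 0 < v (iota 2%:R).
End KDefs.

From HB Require Import structures.
From mathcomp Require Import all_boot all_order all_algebra all_field.
From mathcomp Require Import constructive_ereal.
From mathcomp Require Import ring lra.
Set Implicit Arguments.
Unset Strict Implicit.
Unset Printing Implicit Defensive.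

Import Order.TTheory GRing.Theory Num.Theory.
Local Open Scope ring_scope.
Local Open Scope ereal_scope.

(* Write s = {alpha, a} and let r be the third root. As r lies outside the disc
   cutting out s, v(alpha - r) = v(a - r) < v(alpha - a); so d_+(s) = v(alpha - a),
   the parent of s is R and d_-(s) = v(alpha - r). On the disc of radius
   d_+(s) - b the polynomial of s becomes beta^2 z^2 + beta (alpha - a) z, and on
   the disc of radius d_-(s) + b the polynomial of R \ s becomes
   (alpha - r) + beta z; in both cases one outer coefficient vanishes and the
   middle one has relative valuation b. If h = q^2 + rho with q = q0 + q1 z had
   t >= 2v(2), then q0^2 and q1^2 would match the outer coefficients so closely
   that v(2 q0 q1) exceeds the valuation of the middle coefficient as soon as
   b < 2v(2), which is absurd. At b = 2v(2) completing the square, with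
   q = (alpha - a)/2 + beta z resp. q = sqrt(alpha - r) + beta z / (2 sqrt(alpha - r)),
   leaves an error of relative valuation exactly 2v(2). Hence
   b_0(t_+) = b_0(t_-) = 2v(2). *)

Lemma mem_size2 (T : eqType) (s : seq T) x : uniq s -> size s = 2%N -> x \in s ->
  exists y, [/\ y \in s, x != y & s =i [:: x; y]].
Proof.
case: s => [|x1 [|x2 []]] //=; rewrite inE andbT => x12 _.
rewrite !inE => /orP[]/eqP->; first by exists x2; split; rewrite // !inE eqxx orbT.
by exists x1; split=> [|| z]; rewrite ?inE ?eqxx // 1?eq_sym // orbC.
Qed.

Lemma mem_size3 (T : eqType) (s : seq T) x y :
  uniq s -> size s = 3%N -> x \in s -> y \in s -> x != y ->
  exists z, [/\ z \in s, z \notin [:: x; y] & s =i [:: x; y; z]].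
Proof.
move=> s_uniq s3 xs ys xy.
have [z zs zxy] : exists2 z, z \in s & z \notin [:: x; y].
  case: (boolP (all (mem [:: x; y]) s)) => [/allP sub | /allPn[z]]; last by exists z.
  by have := uniq_leq_size s_uniq sub; rewrite s3.
have xyz_uniq : uniq [:: x; y; z].
  by move: zxy; rewrite /= !inE !negb_or xy !(eq_sym z) andbT.
have xyz_s : {subset [:: x; y; z] <= s} by move=> t; rewrite !inE => /or3P[]/eqP->.
by exists z; split=> // t; rewrite (uniq_min_size xyz_uniq xyz_s _).2 // s3.
Qed.

Lemma closed_sqrt (F : closedFieldType) (c : F) : exists x, (x ^+ 2 = c)%R.
Proof.
have /closed_rootP[x] : size ('X^2 - c%:P : {poly F})%R != 1%N by rewrite size_XnsubC.
by rewrite rootE !hornerE subr_eq0 => /eqP; exists x.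
Qed.

Lemma size_roots_separable (F : closedFieldType) (p : {poly F}) (rs : seq F) :
  separable_poly p -> uniq rs -> (forall x, (x \in rs) = root p x) ->
  size rs = (size p).-1.
Proof.
move=> sep_p rs_uniq rsE; have [r pE] := closed_field_poly_normal p.
have lc_neq0 : lead_coef p != 0%R by rewrite lead_coef_eq0 separable_poly_neq0.
have r_uniq : uniq r.
  by rewrite -separable_prod_XsubC -(eqp_separable (eqp_scale _ lc_neq0)) -pE.
have -> : size rs = size r.
  by apply/perm_size/uniq_perm => // x; rewrite rsE pE rootZ // root_prod_XsubC.
by rewrite pE size_scale // size_prod_XsubC.
Qed.

Section Valuation.
Variables (L : fieldType) (v : L -> \bar rat).
Hypothesis hv : is_valuation v.

Lemma val0 : v 0 = +oo.
Proof. by case: hv => vE _ _ _; apply/vE. Qed.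

Lemma val_fin (x : L) : (x != 0)%R -> exists y : rat, v x = y%:E.
Proof.
case: hv => vE vNy _ _ x0; move: (vNy x) (vE x).
case: (v x) => [y _ _ | _ [/(_ erefl) x_0] | //]; first by exists y.
by rewrite x_0 eqxx in x0.
Qed.

Lemma val_neq0 (x : L) y : v x = y%:E -> (x != 0)%R.
Proof. by move=> vx; apply/eqP => x0; move: vx; rewrite x0 val0. Qed.

Lemma valM (x y : L) : v (x * y) = v x + v y.
Proof. by case: hv. Qed.

Lemma valD_ge t (x y : L) : t <= v x -> t <= v y -> t <= v (x + y).
Proof. by case: hv => _ _ _ vD tx ty; apply: le_trans (vD x y); rewrite le_min tx. Qed.

Lemma valD_gt t (x y : L) : t < v x -> t < v y -> t < v (x + y).
Proof. by case: hv => _ _ _ vD tx ty; apply: lt_le_trans (vD x y); rewrite lt_min tx. Qed.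

Lemma val1 : v 1 = 0.
Proof.
have [y vy] := val_fin (oner_neq0 L).
have /eqP := valM 1 1; rewrite mulr1 vy -EFinD eqe => /eqP y2.
by congr (_%:E); lra.
Qed.

Lemma valN (x : L) : v (- x) = v x.
Proof.
have [y vy] : exists y : rat, v (-1) = y%:E.
  by apply: val_fin; rewrite oppr_eq0 oner_neq0.
have /eqP := valM (-1) (-1); rewrite mulrNN mulr1 val1 vy -EFinD eqe => /eqP y2.
have vN1 : v (-1) = 0 by rewrite vy; congr (_%:E); lra.
by rewrite -mulN1r valM vN1 add0e.
Qed.

Lemma val_distC (x y : L) : v (x - y) = v (y - x).
Proof. by rewrite -valN opprB. Qed.

Lemma valD_eq (x y : L) : v x < v y -> v (x + y) = v x.
Proof.
move=> lt_xy; apply/le_anti; rewrite valD_ge ?(ltW lt_xy) // andbT leNgt.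
apply/negP => lt_x; have := valD_gt lt_x (y := - y); rewrite valN addrK ltxx.
by move/(_ lt_xy).
Qed.

Lemma valV (x : L) y : v x = y%:E -> v x^-1 = (- y)%:E.
Proof.
move=> vx; have [z vz] := val_fin (invr_neq0 (val_neq0 vx)).
have /eqP := valM x x^-1; rewrite mulfV ?(val_neq0 vx) // val1 vx vz -EFinD eqe.
by move=> /eqP yz; congr (_%:E); lra.
Qed.

Lemma vpoly_le_coef (h : {poly L}) i : vpoly v h <= v h`_i.
Proof.
rewrite /vpoly; case: (ltnP i (size h)) => [ih | hi].
  exact: (bigmin_le _ (Ordinal ih)).
by rewrite nth_default // val0 leey.
Qed.

Lemma vpoly_ge (h : {poly L}) t : (forall i, t <= v h`_i) -> t <= vpoly v h.
Proof. by move=> ht; rewrite /vpoly le_bigmin ?leey. Qed.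

Definition quad (c0 c1 c2 : L) : {poly L} := (c0%:P + c1 *: 'X + c2 *: 'X^2)%R.

Lemma coef_quad c0 c1 c2 i : (quad c0 c1 c2)`_i = [:: c0; c1; c2]`_i.
Proof.
rewrite /quad !coefD coefC !coefZ coefX coefXn.
by case: i => [|[|[|i]]] /=; rewrite ?mulr0 ?mulr1 ?addr0 ?add0r // nth_nil.
Qed.

Lemma size_quad c0 c1 c2 : (size (quad c0 c1 c2) <= 3)%N.
Proof. by apply/leq_sizeP => -[|[|[|j]]] // _; rewrite coef_quad /= nth_nil. Qed.

Lemma vpoly_quad c0 c1 c2 :
  vpoly v (quad c0 c1 c2) = Order.min (v c0) (Order.min (v c1) (v c2)).
Proof.
apply/le_anti/andP; split.
  have le_coef i : vpoly v (quad c0 c1 c2) <= v [:: c0; c1; c2]`_i.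
    by rewrite -coef_quad vpoly_le_coef.
  by rewrite !le_min (le_coef 0%N) (le_coef 1%N) (le_coef 2%N).
apply: vpoly_ge => -[|[|[|i]]]; rewrite coef_quad /= ?ge_min ?lexx ?orbT //.
by rewrite nth_nil val0 leey.
Qed.

Lemma quad_lin (q : {poly L}) : (size q <= 2)%N -> q = quad q`_0 q`_1 0.
Proof.
move=> sq; apply/polyP => -[|[|[|i]]]; rewrite coef_quad //= ?nth_nil nth_default //.
exact: leq_trans sq _.
Qed.

Lemma sqr_lin q0 q1 :
  ((quad q0 q1 0) ^+ 2 = quad (q0 ^+ 2) (2%:R * q0 * q1) (q1 ^+ 2))%R.
Proof.
rewrite /quad scale0r addr0 -!mul_polyC !rmorphM ?rmorphXn /= ?rmorph_nat.
ring.
Qed.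

Lemma size_lin q0 q1 : (size (quad q0 q1 0) <= 2)%N.
Proof. by apply/leq_sizeP => -[|[|[|j]]] // _; rewrite coef_quad //= nth_nil. Qed.

Lemma psd_lin (h : {poly L}) q0 q1 :
  (1 < size h)%N -> psd h (quad q0 q1 0) (h - (quad q0 q1 0) ^+ 2)%R.
Proof.
move=> sh; split; first by rewrite addrC subrK.
by move: sh (size_lin q0 q1); case: (size h) => [|[|n]] // _; case: (size _) => [|[|[|]]].
Qed.

Lemma size_quad_gt1 c0 c1 c2 : c1 != 0%R -> (1 < size (quad c0 c1 c2))%N.
Proof.
move=> c1_neq0; rewrite ltnNge; apply/negP => /leq_sizeP/(_ 1%N (leqnn _)).
by rewrite coef_quad; apply/eqP.
Qed.

Lemma psd_quad_lin c0 c1 c2 q rho : psd (quad c0 c1 c2) q rho -> (size q <= 2)%N.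
Proof.
by case=> _; move: (size_quad c0 c1 c2); case: (size (quad _ _ _)) => [|[|[|[|]]]] //;
  case: (size q) => [|[|[|]]].
Qed.

Lemma quadB a b c a' b' c' :
  (quad a b c - quad a' b' c' = quad (a - a') (b - b') (c - c'))%R.
Proof. by rewrite /quad -!mul_polyC !rmorphB /=; ring. Qed.

Lemma polyS_pair_shift alpha a beta :
  (polyS [:: alpha; a] \Po (alpha%:P + beta *: 'X))%R
  = quad 0 (beta * (alpha - a)) (beta ^+ 2).
Proof.
rewrite /polyS !big_cons big_nil mulr1 comp_polyM !comp_polyB comp_polyX !comp_polyC.
by rewrite /quad -!mul_polyC !rmorphM !rmorphB /= ?rmorphXn; ring.
Qed.

Lemma polyS_single_shift alpha r beta :
  (polyS [:: r] \Po (alpha%:P + beta *: 'X))%R = quad (alpha - r) beta 0.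
Proof.
rewrite /polyS big_cons big_nil mulr1 comp_polyB comp_polyX comp_polyC.
by rewrite /quad -!mul_polyC !rmorphB /=; ring.
Qed.

Lemma tS_perm S S' alpha beta :
  perm_eq S S' -> tS v S alpha beta = tS v S' alpha beta.
Proof. by move=> pS; rewrite /tS /polyS (perm_big _ pS). Qed.

Lemma tS_two_v2P S alpha beta (h := (polyS S \Po (alpha%:P + beta *: 'X))%R) :
  tS v S alpha beta (two_v2 v) <->
  exists q rho, psd h q rho /\ two_v2 v <= tqr v h rho.
Proof.
split=> [[q [rho [[hpsd _] t2]]] | [q [rho [hpsd t2]]]]; exists q, rho.
  by split=> //; rewrite {1}t2 ge_min lexx.
by split; [split; [|left] | rewrite min_r].
Qed.

Lemma is_b0_two_v2 (T : rat -> \bar rat -> Prop) c : (0 <= c)%R ->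
  (forall b, (0 <= b <= c)%R -> T b (two_v2 v) <-> b = c) -> is_b0 v T c.
Proof.
move=> c0 Tc; split=> // [|b b0 bc]; first by apply/(Tc c); rewrite ?c0 /=.
by move/(Tc b); rewrite b0 ltW // => /(_ isT) eq_bc; rewrite eq_bc ltxx in bc.
Qed.

Lemma dplus_eq (t : seq L) x y m : x \in t -> y \in t -> x != y ->
  v (x - y)%R = m ->
  (forall a a', a \in t -> a' \in t -> a != a' -> m <= v (a - a')%R) ->
  dplus v t = m.
Proof.
move=> xt yt xy vxy m_le; apply/le_anti/andP; split.
  apply: (bigmin_inf_seq _ x _ _ _ xt) => //.
  by apply: (bigmin_inf_seq _ y _ _ _ yt xy); rewrite vxy.
rewrite /dplus big_seq le_bigmin ?leey // => a ta.
by rewrite big_seq_cond le_bigmin ?leey // => a' /andP[ta' aa']; apply: m_le.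
Qed.

Lemma cluster_sub rs s : is_cluster v rs s -> {subset s <= rs}.
Proof. by case=> _ [c [b mem]] x; rewrite mem => /andP[]. Qed.

Lemma cluster_outside rs s z : is_cluster v rs s -> z \in rs -> z \notin s ->
  exists e : rat, forall x y, x \in s -> y \in s ->
    v (x - z)%R = e%:E /\ e%:E < v (x - y)%R.
Proof.
case=> _ [c [b mem]] zrs; rewrite mem zrs /= -ltNge => lt_zc.
have [e ve] : exists e : rat, v (z - c)%R = e%:E.
  by apply: val_fin; apply: contraTneq lt_zc => ->; rewrite val0 ltNge leey.
have lt_eb : (e < b)%R by rewrite -lte_fin -ve.
have near_c x : x \in s -> b%:E <= v (x - c)%R by rewrite mem => /andP[].
exists e => x y xs ys; split.
  have -> : (x - z = - (z - c) + (x - c))%R by ring.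
  by rewrite valD_eq valN ?ve // (lt_le_trans _ (near_c x xs)) ?lte_fin.
have -> : (x - y = (x - c) + - (y - c))%R by ring.
by apply: (lt_le_trans _ (valD_ge (near_c x xs) _)); rewrite ?valN ?near_c ?lte_fin.
Qed.

Section TwoAdic.
Variable w : rat.
Hypothesis hw : v 2%:R = w%:E.

Lemma two_v2E : two_v2 v = (w + w)%:E.
Proof. by rewrite /two_v2 hw -EFinD. Qed.

Lemma two_v2_le_tqr h rho m : vpoly v h = m%:E ->
  (two_v2 v <= tqr v h rho) = ((m + (w + w))%:E <= vpoly v rho).
Proof. by move=> vh; rewrite two_v2E /tqr vh leeBrDr // -EFinD addrC. Qed.

Lemma two_neq0 : (2%:R : L) != 0%R.
Proof. exact: val_neq0 hw. Qed.

Lemma val_double_product_gt m b q0 q1 : (b < w + w)%R ->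
  m%:E <= v (q0 ^+ 2)%R -> (m + b)%:E < v (q1 ^+ 2)%R ->
  (m + b)%:E < v (2%:R * q0 * q1)%R.
Proof.
have [->|q0_neq0] := eqVneq q0 0%R; first by rewrite mulr0 mul0r val0 ltey.
have [->|q1_neq0] := eqVneq q1 0%R; first by rewrite mulr0 val0 ltey.
have [[x0 vq0] [x1 vq1]] := (val_fin q0_neq0, val_fin q1_neq0).
rewrite !expr2 !valM hw vq0 vq1 -!EFinD lee_fin !lte_fin; lra.
Qed.

Lemma tqr_quad_lt c0 c1 c2 m b q rho : (c0 = 0 \/ c2 = 0)%R ->
  vpoly v (quad c0 c1 c2) = m%:E -> v c1 = (m + b)%:E -> (b < w + w)%R ->
  psd (quad c0 c1 c2) q rho -> tqr v (quad c0 c1 c2) rho < two_v2 v.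
Proof.
move=> c02 vh vc1 lt_b2w hpsd; rewrite ltNge (two_v2_le_tqr _ vh).
apply/negP => le_rho.
have b_ge0 : (0 <= b)%R.
  by have := vpoly_le_coef (quad c0 c1 c2) 1; rewrite vh coef_quad vc1 lee_fin; lra.
have rhoE : rho = (quad (c0 - q`_0 ^+ 2) (c1 - 2%:R * q`_0 * q`_1) (c2 - q`_1 ^+ 2))%R.
  have [hE _] := hpsd.
  by rewrite -quadB -sqr_lin -quad_lin ?(psd_quad_lin hpsd) // hE addrC addKr.
have rho_gt i : (m + b)%:E < v rho`_i.
  apply: lt_le_trans (le_trans le_rho (vpoly_le_coef _ _)).
  by rewrite lte_fin; lra.
move: (rho_gt 0%N) (rho_gt 1%N) (rho_gt 2%N).
rewrite rhoE !coef_quad /= => gap0 gap1 gap2.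
have c_ge i : m%:E <= v [:: c0; c1; c2]`_i by rewrite -coef_quad -vh vpoly_le_coef.
have sq_ge c x : m%:E <= v c -> (m + b)%:E < v (c - x)%R -> m%:E <= v x.
  move=> le_c lt_cx; have -> : x = (c + - (c - x))%R by rewrite opprB addrC subrK.
  by apply: valD_ge; rewrite // valN (ltW (le_lt_trans _ lt_cx)) // lee_fin; lra.
have cross : (m + b)%:E < v (2%:R * q`_0 * q`_1)%R.
  case: c02 => c_0; rewrite c_0 sub0r valN in gap0 gap2.
  - by rewrite mulrAC; apply: val_double_product_gt => //; apply: sq_ge (c_ge 2%N) gap2.
  - by apply: val_double_product_gt => //; apply: sq_ge (c_ge 0%N) gap0.
by have := valD_gt gap1 cross; rewrite subrK vc1 ltxx.
Qed.

Lemma tS_pair_two_v2P alpha a beta D b :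
  v (alpha - a)%R = D%:E -> v beta = (D - b)%:E -> (0 <= b <= w + w)%R ->
  tS v [:: alpha; a] alpha beta (two_v2 v) <-> b = (w + w)%R.
Proof.
move=> vD vbeta /andP[b_ge0 b_le]; rewrite tS_two_v2P polyS_pair_shift.
set h := quad _ _ _.
have vh : vpoly v h = ((D - b) + (D - b))%:E.
  rewrite vpoly_quad val0 (min_r (leey _)) expr2 !valM vbeta vD -!EFinD.
  by rewrite min_r // lee_fin; lra.
split=> [[q [rho [hpsd le_t]]] | b_eq].
  apply/eqP; rewrite eq_le b_le leNgt /=; apply/negP => lt_b.
  have vc1 : v (beta * (alpha - a))%R = ((D - b + (D - b)) + b)%:E.
    by rewrite valM vbeta vD -EFinD; congr _%:E; lra.
  by have := tqr_quad_lt (or_introl erefl) vh vc1 lt_b hpsd; rewrite ltNge le_t.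
have beta_neq0 := val_neq0 vbeta; have alpha_a := val_neq0 vD.
set q0 := ((alpha - a) / 2%:R)%R.
exists (quad q0 beta 0), (h - quad q0 beta 0 ^+ 2)%R; split.
  by apply/psd_lin/size_quad_gt1; rewrite mulf_neq0.
rewrite (two_v2_le_tqr _ vh) sqr_lin quadB.
have -> : (beta * (alpha - a) - 2%:R * q0 * beta = 0)%R.
  by rewrite /q0; field; apply: two_neq0.
rewrite !subrr vpoly_quad val0 minxx (min_l (leey _)) sub0r valN.
by rewrite expr2 valM /q0 valM vD (valV hw) -!EFinD lee_fin b_eq; lra.
Qed.

Lemma tS_single_two_v2P alpha r beta E b :
  (exists s0, s0 ^+ 2 = alpha - r)%R ->
  v (alpha - r)%R = E%:E -> v beta = (E + b)%:E -> (0 <= b <= w + w)%R ->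
  tS v [:: r] alpha beta (two_v2 v) <-> b = (w + w)%R.
Proof.
move=> [s0 s0E] vE vbeta /andP[b_ge0 b_le]; rewrite tS_two_v2P polyS_single_shift.
set h := quad _ _ _.
have vh : vpoly v h = E%:E.
  by rewrite vpoly_quad val0 vE vbeta (min_l (leey _)) min_l // lee_fin; lra.
split=> [[q [rho [hpsd le_t]]] | b_eq].
  apply/eqP; rewrite eq_le b_le leNgt /=; apply/negP => lt_b.
  by have := tqr_quad_lt (or_intror erefl) vh vbeta lt_b hpsd; rewrite ltNge le_t.
have s0_neq0 : s0 != 0%R.
  by apply: contra_neq (val_neq0 vE); rewrite -s0E => ->; rewrite expr0n.
set q1 := (beta / (2%:R * s0))%R.
exists (quad s0 q1 0), (h - quad s0 q1 0 ^+ 2)%R; split.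
  by apply/psd_lin/size_quad_gt1; exact: val_neq0 vbeta.
rewrite (two_v2_le_tqr _ vh) sqr_lin quadB s0E subrr.
have -> : (beta - 2%:R * s0 * q1 = 0)%R by rewrite /q1; field; rewrite s0_neq0 two_neq0.
have -> : (q1 ^+ 2 = beta ^+ 2 / (2%:R * 2%:R * s0 ^+ 2))%R.
  have four_neq0 : (4%:R : L) != 0%R by rewrite (natrM L 2 2) mulf_neq0 ?two_neq0.
  by rewrite /q1; field; rewrite s0_neq0 four_neq0 two_neq0.
have v4E : v (2%:R * 2%:R * (alpha - r))%R = (w + w + E)%:E by rewrite !valM hw vE.
rewrite s0E vpoly_quad val0 sub0r valN !(min_r (leey _)).
by rewrite valM expr2 valM vbeta (valV v4E) -!EFinD lee_fin b_eq; lra.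
Qed.

Lemma is_b0_tplus_pair s alpha a : (0 <= w)%R -> uniq s -> s =i [:: alpha; a] ->
  alpha != a -> is_b0 v (tplus v s alpha) (w + w).
Proof.
move=> w_ge0 s_uniq sE alpha_a.
have s_perm : perm_eq s [:: alpha; a] by apply: uniq_perm; rewrite //= inE alpha_a.
have [D vD] : exists D : rat, v (alpha - a)%R = D%:E by apply: val_fin; rewrite subr_eq0.
have dplusE : dplus v s = D%:E.
  apply: (@dplus_eq _ alpha a); rewrite ?sE ?inE ?eqxx ?orbT //.
  move=> x y; rewrite !sE !inE => /orP[]/eqP-> /orP[]/eqP->; rewrite ?eqxx // => _.
    by rewrite vD.
  by rewrite val_distC vD.
apply: is_b0_two_v2 => [|b b_range]; first lra.
rewrite /tplus dplusE; split=> [[beta [vbeta]] | b_eq].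
  rewrite -EFinB in vbeta.
  by rewrite (tS_perm _ _ s_perm) => /(tS_pair_two_v2P vD vbeta b_range).
have v4 : v (2%:R * 2%:R)%R = (w + w)%:E by rewrite valM hw.
exists ((alpha - a) / (2%:R * 2%:R))%R.
have vbeta : v ((alpha - a) / (2%:R * 2%:R))%R = (D - b)%:E.
  by rewrite valM vD (valV v4) b_eq.
by rewrite vbeta EFinB (tS_perm _ _ s_perm); split=> //; apply/(tS_pair_two_v2P vD vbeta).
Qed.

Section ThreeRoots.
Variables (alpha a r : L) (rs s : seq L) (E : rat).
Hypotheses (rs_uniq : uniq rs) (rsE : rs =i [:: alpha; a; r]).
Hypotheses (sE : s =i [:: alpha; a]) (r_notin_s : r \notin s).
Hypotheses (vE : v (alpha - r)%R = E%:E) (vE' : v (a - r)%R = E%:E).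
Hypothesis ltE : E%:E < v (alpha - a)%R.

Lemma rs_notin_s_eq z : z \in rs -> z \notin s -> z = r.
Proof. by rewrite rsE sE !inE => /or3P[]/eqP-> //; rewrite eqxx ?orbT. Qed.

Lemma rs_dist_ge x y : x \in rs -> y \in rs -> x != y -> E%:E <= v (x - y)%R.
Proof.
rewrite !rsE !inE => /or3P[]/eqP-> /or3P[]/eqP->; rewrite ?eqxx // => _;
  by rewrite ?(val_distC r) ?(val_distC a alpha) ?vE ?vE' ?(ltW ltE).
Qed.

Lemma is_parent_rs : is_parent v rs s rs.
Proof.
have s_rs : {subset s <= rs}.
  by move=> x; rewrite sE rsE !inE => /orP[]->; rewrite ?orbT.
have r_rs : r \in rs by rewrite rsE !inE eqxx !orbT.
split=> //.
- split; first by apply/eqP => rs0; rewrite rs0 in r_rs.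
  exists alpha, E => x; case x_rs: (x \in rs) => //=; symmetry.
  have [->|x_alpha] := eqVneq x alpha; first by rewrite subrr val0 leey.
  by apply: rs_dist_ge => //; apply: s_rs; rewrite sE inE eqxx.
- by split=> //; exists r.
- move=> c c_cl [s_c [z z_c z_s]] x; rewrite rsE !inE => /or3P[]/eqP->.
  + by apply: s_c; rewrite sE inE eqxx.
  + by apply: s_c; rewrite sE !inE eqxx orbT.
  + by rewrite -(rs_notin_s_eq (cluster_sub c_cl z_c) z_s).
Qed.

Lemma dplus_parent s' : is_parent v rs s s' -> dplus v s' = E%:E.
Proof.
case=> s'_cl [s_s' [z z_s' z_s]] _; have s'_rs := cluster_sub s'_cl.
apply: (@dplus_eq _ alpha r) => //.
- by apply: s_s'; rewrite sE inE eqxx.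
- by rewrite -(rs_notin_s_eq (s'_rs z z_s') z_s).
- by apply: contraNneq r_notin_s => <-; rewrite sE inE eqxx.
- by move=> x y /s'_rs x_rs /s'_rs y_rs; apply: rs_dist_ge.
Qed.

Lemma rs_notin_s_perm : perm_eq [seq y <- rs | y \notin s] [:: r].
Proof.
apply: uniq_perm; rewrite ?filter_uniq // => y; rewrite mem_filter inE.
apply/andP/eqP => [[y_s y_rs] | ->]; first exact: rs_notin_s_eq.
by rewrite r_notin_s rsE !inE eqxx !orbT.
Qed.

Lemma is_b0_tminus : (0 <= w)%R -> (exists s0, s0 ^+ 2 = alpha - r)%R ->
  is_b0 v (tminus v rs s alpha) (w + w).
Proof.
move=> w_ge0 sqrt_ar; apply: is_b0_two_v2 => [|b b_range]; first lra.
split=> [[s' [s'_par [beta [vbeta]]]] | b_eq].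
  rewrite (dplus_parent s'_par) -EFinD in vbeta.
  by rewrite (tS_perm _ _ rs_notin_s_perm) => /(tS_single_two_v2P sqrt_ar vE vbeta b_range).
have vbeta : v (2%:R * 2%:R * (alpha - r))%R = (E + b)%:E.
  by rewrite !valM hw vE b_eq -!EFinD addrC.
exists rs; split; first exact: is_parent_rs.
exists (2%:R * 2%:R * (alpha - r))%R; rewrite (dplus_parent is_parent_rs) -EFinD.
by rewrite (tS_perm _ _ rs_notin_s_perm); split=> //; apply/(tS_single_two_v2P sqrt_ar vE vbeta).
Qed.

End ThreeRoots.

End TwoAdic.

End Valuation.

Theorem corollary1p3
  (K : fieldType) (L : closedFieldType) (iota : {rmorphism K -> L})
  (v : L -> \bar rat)
  (charK0 : [pchar K] =i pred0)
  (hv : is_valuation v)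
  (halg : algebraic_over iota)
  (hdisc : discrete_on_K iota v)
  (hcompl : complete_on_K iota v)
  (hres2 : residue_char2 iota v)
  (hresac : residue_alg_closed iota v)
  (f : {poly K}) (hdeg : size f = 4%N) (hsep : separable_poly f)
  (rs : seq L) (hrs_uniq : uniq rs)
  (hrs : forall x, (x \in rs) = root (map_poly iota f) x)
  (s : seq L) (hs_cl : is_cluster v rs s) (hs_uniq : uniq s)
  (hs_size : size s = 2%N)
  (alpha : L) (halpha : alpha \in s) :
  exists bp bm : rat,
    [/\ is_b0 v (tplus v s alpha) bp,
        is_b0 v (tminus v rs s alpha) bm &
        (bp + bm)%R%:E = two_v2 v + two_v2 v].
Proof.
have two_neq0_L : (2%:R : L) != 0%R.
  by rewrite -(rmorph_nat iota) fmorph_eq0; have := charK0 2%N; rewrite !inE /= => ->.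
have [w hw] := val_fin hv two_neq0_L.
have w_ge0 : (0 <= w)%R.
  by move: hres2; rewrite /residue_char2 rmorph_nat hw lte_fin => /ltW.
have size_rs : size rs = 3%N.
  by rewrite (size_roots_separable _ hrs_uniq hrs) ?separable_map // size_map_poly hdeg.
have [a [a_s alpha_a sE]] := mem_size2 hs_uniq hs_size halpha.
have s_rs := cluster_sub hs_cl.
have [r [r_rs r_s rsE]] := mem_size3 hrs_uniq size_rs (s_rs _ halpha) (s_rs _ a_s) alpha_a.
rewrite -sE in r_s.
have [e vr_e] := cluster_outside hv hs_cl r_rs r_s.
have [[vE ltE] [vE' _]] := (vr_e _ _ halpha a_s, vr_e _ _ a_s halpha).
exists (w + w)%R, (w + w)%R; split.
- exact (is_b0_tplus_pair hv hw w_ge0 hs_uniq sE alpha_a).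
- exact (is_b0_tminus hv hw hrs_uniq rsE sE r_s vE vE' ltE w_ge0 (closed_sqrt _)).
- by rewrite (two_v2E hw) -EFinD.
Qed.
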